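(* Let Assumptions 1 and 2 hold and consider the EPS model with AGC. Take as input $\boldsymbol u_1:=-\boldsymbol p^H=(-p_i^H)_{i\in\mathcal E^{HP}}$ and as output $\boldsymbol y_1:=\boldsymbol\omega^{HP}=(\omega_i)_{i\in\mathcal E^{HP}}$. Then the EPS is strictly passive from $\boldsymbol u_1$ to $\boldsymbol y_1$: there exist a storage function $V_e\ge 0$ of the EPS state $(\boldsymbol x_\theta,\boldsymbol\omega,\boldsymbol P^G,g)$ and a constant $\rho_e>0$ such that along all trajectories $$\dot V_e\le \boldsymbol y_1^\top\boldsymbol u_1-\rho_e\|\boldsymbol y_1\|^2 .$$
   Context: Electric power system (EPS); all variables are deviations from a nominal steady state. The set of buses is $\mathcal E=\mathcal E^{DG}\cup\mathcal E^{HP}$ (disjoint union), $n^{\mathcal E}=|\mathcal E|$, with a distinguished reference bus $r\in\mathcal E$; $\mathcal E^{HP}$ are the buses hosting heat pumps (HPs), $n^{HP}=|\mathcal E^{HP}|$. For each bus $i$: frequency deviation $\omega_i$, phase angle $\theta_i$ with $\dot\theta_i=\omega_i$, inertia $M_i>0$, damping $D_i>0$, controllable generation $P_i^G$, control input $u_i$, load disturbance $P_i^L$, constant voltage magnitude $V_i>0$, line susceptances $B_{ij}$. Dynamics: $T_{g,i}\dot P_i^G=-P_i^G+u_i$ with $T_{g,i}>0$, $i\in\mathcal E$; $M_i\dot\omega_i=-D_i\omega_i-P_i+P_i^G$ for $i\in\mathcal E^{DG}$; $M_i\dot\omega_i=-D_i\omega_i-P_i+P_i^G-p_i^H$ for $i\in\mathcal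 E^{HP}$, where $p_i^H$ is the electric power consumed by the HP at bus $i$; $P_i=\sum_j|B_{ij}|V_iV_j\sin(\theta_i-\theta_j)-P_i^L$; $\boldsymbol x_\theta=\boldsymbol R_I\boldsymbol\theta$ (angle differences), so $\dot{\boldsymbol x}_\theta=\boldsymbol R_I\boldsymbol\omega$, with $\boldsymbol R_I=[\boldsymbol I_{n^{\mathcal E}-1},\,-\boldsymbol 1_{n^{\mathcal E}-1}]$; AGC: $\dot g=-\omega_r$, $u_i=-K_i^P\omega_i+\delta_{ir}K^Ig$, with droop gains $K_i^P>0$, AGC gain $K^I>0$, and $\delta_{ir}=1$ if $i=r$, $0$ otherwise. Assumption 1: for any constant $\bar{\boldsymbol P}^L$ and $\bar{\boldsymbol p}^H$, the EPS (generation, swing, power-flow and angle equations) admits an equilibrium $(\boldsymbol x_\theta^*,\boldsymbol\theta^*,\boldsymbol\omega^*,\boldsymbol P^{G*},\boldsymbol P^*,\boldsymbol u^* )$ with $\boldsymbol\omega^*=\omega^{com}\boldsymbol 1_{n^{\mathcal E}}$ for some common frequency $\omega^{com}\in\mathbb R$. Assumption 2: $D_i\ge D_{\min}>0$ for all $i\in\mathcal E$, and for each $i$ the transfer function from $-\omega_i$ to $P_i^G$ (including damping), $G_i(s)=D_i+\frac{K_i^P}{T_{g,i}s+1}+\delta_{ir}\frac{K^I}{s(T_{g,i}s+1)}$, is strictly positive real in the sense that there is $\rho_i>0$ with $\operatorname{Re}G_i(j\omega)\ge\rho_i$ for all $\omega\in\mathbb R$. $\|\cdot\|$ is the Euclidean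 norm. *)

From HB Require Import structures.
From mathcomp Require Import all_boot all_order all_algebra.
From mathcomp Require Import all_classical all_reals all_analysis.
From mathcomp Require Import complex.
Set Implicit Arguments. Unset Strict Implicit. Unset Printing Implicit Defensive.
Import Order.TTheory GRing.Theory Num.Theory.
Local Open Scope ring_scope.

Section EPS.
Variable R : realType.
Variable n : nat.
(* buses are 'I_n.+1 (n^E = n+1 >= 1, since the reference bus r exists) *)
Local Notation bus := 'I_n.+1.

Definition ind (b : bool) : R := if b then 1 else 0.

Definition power_flow (B : bus -> bus -> R) (Vm : bus -> R)
  (theta : bus -> R) (PL : bus -> R) (i : bus) : R :=
  (\sum_(j < n.+1) `|B i j| * Vm i * Vm j * sin (theta i - theta j)) - PL i.

(* angle differences x_theta = R_I theta, R_I = [I_{n^E-1}, -1_{n^E-1}] *)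
Definition x_theta (theta : bus -> R) : 'I_n -> R :=
  fun k => theta (widen_ord (leqnSn n) k) - theta ord_max.

Definition agc_u (r : bus) (KP : bus -> R) (KI : R) (om : bus -> R) (g : R)
  (i : bus) : R := - KP i * om i + ind (i == r) * KI * g.

Definition eps_agc_traj (HP : {set bus}) (r : bus)
  (M D Tg KP Vm : bus -> R) (B : bus -> bus -> R) (KI : R)
  (PL pH : bus -> R -> R)
  (theta om PG : bus -> R -> R) (g : R -> R) : Prop :=
  forall t : R,
    (forall i : bus,
      [/\ derivable (PG i) t 1,
          derivable (om i) t 1 & derivable (theta i) t 1] /\
      [/\ Tg i * derive1 (PG i) t
            = - PG i t + agc_u r KP KI (fun j => om j t) (g t) i,
          M i * derive1 (om i) t
            = - D i * om i t
              - power_flow B Vm (fun j => theta j t) (fun j => PL j t) i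
              + PG i t - ind (i \in HP) * pH i t
        & derive1 (theta i) t = om i t])
    /\ derivable g t 1 /\ derive1 g t = - om r t.

Definition assumption1 (HP : {set bus}) (D : bus -> R)
  (B : bus -> bus -> R) (Vm : bus -> R) : Prop :=
  forall PLbar pHbar : bus -> R,
  exists (theta_s : bus -> R) (om_com : R) (PG_s u_s : bus -> R),
    forall i : bus,
      0 = - PG_s i + u_s i /\
      0 = - D i * om_com - power_flow B Vm theta_s PLbar i + PG_s i
          - ind (i \in HP) * pHbar i.

Local Open Scope complex_scope.
Definition G_tf (r : bus) (D Tg KP : bus -> R) (KI : R) (i : bus)
  (s : R[i]) : R[i] :=
  (D i)%:C + (KP i)%:C / ((Tg i)%:C * s + 1)
  + (if i == r then (KI)%:C / (s * ((Tg i)%:C * s + 1)) else 0).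
Local Close Scope complex_scope.

Definition assumption2 (r : bus) (D Tg KP : bus -> R) (KI : R) : Prop :=
  (exists Dmin : R, 0 < Dmin /\ forall i, Dmin <= D i) /\
  forall i : bus, exists rho : R, 0 < rho /\
    forall w : R, w != 0 ->
      rho <= complex.Re (G_tf r D Tg KP KI i (Complex 0 w)).

End EPS.

From HB Require Import structures.
From mathcomp Require Import all_boot all_order all_algebra.
From mathcomp Require Import all_classical all_reals all_analysis.
From mathcomp Require Import complex.
From mathcomp Require Import ring lra.
Set Implicit Arguments. Unset Strict Implicit. Unset Printing Implicit Defensive.
Import Order.TTheory GRing.Theory Num.Theory.
Local Open Scope ring_scope.

(* The storage function adds to the kinetic energies M_i w_i^2/2 the potential
   energy of the lossless network and a governor storage at each bus:
   T_i (P_i^G)^2 / (2 K_i^P) at an ordinary bus and, at the reference bus,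
   K^I g^2/2 + x T_r (P_r^G - K^I g)^2/2 for a weight x > 0 still to be chosen.
   Along trajectories the network terms cancel because B is symmetric, an
   ordinary bus dissipates D_i w_i^2 + (P_i^G)^2 / K_i^P, and the reference bus
   leaves a quadratic form in (w_r, P_r^G - K^I g) with cross coefficient
   1 - x (K_r^P - T_r K^I).  Strict positive realness of G_r at low frequency
   gives D_r + K_r^P - T_r K^I > 0, which is exactly what is needed to choose x
   and a margin eps > 0 making this form dominate eps w_r^2. *)

Lemma sum_antisym_diff (R : numFieldType) m (a : 'I_m -> 'I_m -> R)
    (w : 'I_m -> R) :
  (forall i j, a j i = - a i j) ->
  \sum_i \sum_j a i j * (w i - w j) / 2 = \sum_i w i * \sum_j a i j.
Proof.
move=> a_antisym.
have swap : \sum_i \sum_j a i j * w j = - \sum_i w i * \sum_j a i j.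
  rewrite exchange_big -sumrN; apply: eq_bigr => j _.
  rewrite mulr_sumr -sumrN; apply: eq_bigr => i _.
  by rewrite a_antisym mulNr mulrC.
rewrite (eq_bigr (fun i => (w i * \sum_j a i j - \sum_j a i j * w j) / 2)).
  by rewrite -mulr_suml sumrB swap opprK; field.
by move=> i _; rewrite mulr_sumr -sumrB mulr_suml; apply: eq_bigr => j _; ring.
Qed.

Section RealLemmas.
Variable R : realType.

Lemma is_derive_sum_apply m (h : 'I_m -> R -> R) (dh : 'I_m -> R) (t : R) :
  (forall i, is_derive t 1 (h i) (dh i)) ->
  is_derive t 1 (fun s => \sum_(i < m) h i s) (\sum_(i < m) dh i).
Proof.
move=> h_der; have := is_derive_sum h_der.
by have -> : \sum_(i < m) h i = (fun s => \sum_(i < m) h i s)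
  by apply/funext => s; rewrite fct_sumE.
Qed.

Lemma dc_gain_gt0 (Dr k rho : R) : 0 < Dr -> 0 < rho ->
  (forall d, 0 < d -> rho <= Dr + k / (1 + d)) -> 0 < Dr + k.
Proof.
move=> Dr_gt0 rho_gt0 spr.
pose d := rho / (2 * Dr).
have d_gt0 : 0 < d by rewrite divr_gt0 // mulr_gt0.
have dDr : d * Dr = rho / 2 by rewrite /d; field; rewrite gt_eqF.
have : rho * (1 + d) <= Dr * (1 + d) + k.
  have := ler_wpM2r (ltW (addr_gt0 ltr01 d_gt0)) (spr d d_gt0).
  by rewrite mulrDl divfK // gt_eqF // addr_gt0.
have : 0 <= rho * d by rewrite mulr_ge0 // ltW.
nra.
Qed.

Lemma exists_psd_cross_weight (Dr k : R) : 0 < Dr -> 0 < Dr + k ->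
  exists eps x : R, [/\ 0 < eps, 0 < x & forall a b : R,
    0 <= (Dr - eps) * a ^+ 2 - (1 - x * k) * (a * b) + x * b ^+ 2].
Proof.
move=> Dr_gt0 Drk_gt0; case: (ltrP 0 k) => [k_gt0 | k_le0].
  exists (Dr / 2), k^-1; split => [||a b]; [lra | by rewrite invr_gt0 |].
  rewrite mulVf ?gt_eqF // subrr mul0r subr0.
  by rewrite addr_ge0 // mulr_ge0 ?sqr_ge0 ?invr_ge0 ?ltW //; lra.
pose A := (Dr - k) / 2.
have A_gt0 : 0 < A by rewrite /A; lra.
exists ((Dr + k) / 2), A^-1; split => [||a b]; [lra | by rewrite invr_gt0 |].
have -> : (Dr - (Dr + k) / 2) * a ^+ 2 - (1 - A^-1 * k) * (a * b) + A^-1 * b ^+ 2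
    = A^-1 / 4 * ((2 * b - (A - k) * a) ^+ 2 + (A + k) * (3 * A - k) * a ^+ 2).
  by rewrite /A; field; lra.
have Ak_ge0 : 0 <= A + k by rewrite /A; lra.
have A3k_ge0 : 0 <= 3 * A - k by lra.
apply: mulr_ge0; first by rewrite divr_ge0 // invr_ge0 ltW.
exact: addr_ge0 (sqr_ge0 _) (mulr_ge0 (mulr_ge0 Ak_ge0 A3k_ge0) (sqr_ge0 _)).
Qed.

Lemma dissipation_split (Q X e rho w u : R) (b : bool) :
  0 <= X -> 0 <= rho -> rho <= e ->
  Q = - X - e * w ^+ 2 + ind R b * (w * u) ->
  Q <= (if b then w * u - rho * w ^+ 2 else 0).
Proof.
move=> X_ge0 rho_ge0 rho_le_e ->.
have w2_ge0 := sqr_ge0 w.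
have : rho * w ^+ 2 <= e * w ^+ 2 by rewrite ler_wpM2r.
have : 0 <= rho * w ^+ 2 by rewrite mulr_ge0.
by case: b; rewrite /ind ?mul1r ?mul0r; lra.
Qed.

End RealLemmas.

Lemma Re_G_tf_ref (R : realType) n (r : 'I_n.+1) D Tg KP KI (w : R) : w != 0 ->
  complex.Re (G_tf r D Tg KP KI r (Complex 0 w)) =
  D r + (KP r - Tg r * KI) / (1 + w ^+ 2 * Tg r ^+ 2).
Proof.
move=> w_neq0; rewrite /G_tf eqxx /=.
rewrite !(mul0r, mulr0, addr0, add0r, subr0, sub0r, mulrN, mulNr, opprK, oppr0).
rewrite ?add0r ?mulr1 ?sqrrN ?expr1n.
have w2_gt0 : 0 < w ^+ 2 by rewrite exprn_even_gt0.
have den1 : 1 + w ^+ 2 * Tg r ^+ 2 != 0.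
  by apply/lt0r_neq0; have := sqr_ge0 (Tg r); nra.
have den2 : (w * (Tg r * w)) ^+ 2 + w ^+ 2 != 0.
  by apply/lt0r_neq0; have := sqr_ge0 (w * (Tg r * w)); lra.
by field; rewrite exprMn den1 den2.
Qed.

Lemma ref_dc_gain_gt0 (R : realType) n (r : 'I_n.+1) (D Tg KP : 'I_n.+1 -> R) KI :
  0 < D r -> 0 < Tg r -> assumption2 r D Tg KP KI ->
  0 < D r + (KP r - Tg r * KI).
Proof.
move=> D_gt0 Tg_gt0 [_ spr]; have [rho [rho_gt0 rho_le]] := spr r.
apply: (dc_gain_gt0 D_gt0 rho_gt0) => d d_gt0.
pose w := Num.sqrt d / Tg r.
have w_neq0 : w != 0 by rewrite mulf_neq0 ?invr_eq0 ?gt_eqF ?sqrtr_gt0.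
have <- : w ^+ 2 * Tg r ^+ 2 = d.
  by rewrite -exprMn divfK ?gt_eqF // sqr_sqrtr // ltW.
by rewrite -Re_G_tf_ref //; exact: rho_le.
Qed.

Section Network.
Variables (R : realType) (n : nat).
Variables (B : 'I_n.+1 -> 'I_n.+1 -> R) (Vm : 'I_n.+1 -> R).

Definition line_coef i j := `|B i j| * Vm i * Vm j.

Definition network_potential (th : 'I_n.+1 -> R) : R :=
  \sum_i \sum_j line_coef i j * (1 - cos (th i - th j)) / 2.

Lemma network_potential_ge0 th :
  (forall i, 0 < Vm i) -> 0 <= network_potential th.
Proof.
move=> Vm_gt0; apply: sumr_ge0 => i _; apply: sumr_ge0 => j _.
rewrite divr_ge0 // mulr_ge0 ?subr_ge0 ?cos_le1 //.
by rewrite /line_coef !mulr_ge0 // ltW.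
Qed.

Definition rel_angle (xth : 'I_n -> R) (j : 'I_n.+1) : R :=
  if unlift ord_max j is Some k then xth k else 0.

Lemma rel_angle_x_theta th j : rel_angle (x_theta th) j = th j - th ord_max.
Proof.
rewrite /rel_angle; case: unliftP => [k ->|->]; last by rewrite subrr.
rewrite /x_theta; congr (th _ - _); apply: val_inj => /=.
by rewrite /bump leqNgt ltn_ord.
Qed.

Lemma network_potential_rel_angle th :
  network_potential (rel_angle (x_theta th)) = network_potential th.
Proof.
apply: eq_bigr => i _; apply: eq_bigr => j _.
by rewrite !rel_angle_x_theta opprB addrA subrK.
Qed.

Hypothesis B_sym : forall i j, B i j = B j i.

Lemma is_derive_network_potential (th : 'I_n.+1 -> R -> R)
    (w : 'I_n.+1 -> R) (t : R) :
  (forall i, is_derive t 1 (th i) (w i)) ->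
  is_derive t 1 (fun s => network_potential (fun j => th j s))
    (\sum_i w i * power_flow B Vm (fun j => th j t) (fun _ => 0) i).
Proof.
move=> th_der.
have term_der i j : is_derive t 1
    (fun s => line_coef i j * (1 - cos (th i s - th j s)) / 2)
    (line_coef i j * sin (th i t - th j t) * (w i - w j) / 2).
  apply: is_derive_eq; rewrite -?[_ *: _]/(_ * _); by field.
rewrite /network_potential.
apply: (is_derive_eq (is_derive_sum_apply (fun i => is_derive_sum_apply (term_der i)))).
rewrite sum_antisym_diff; first by apply: eq_bigr => i _; rewrite /power_flow subr0.
by move=> i j; rewrite /line_coef B_sym -[th j t - _]opprB sinN; ring.
Qed.

End Network.

Section Storage.
Variables (R : realType) (n : nat) (r : 'I_n.+1).
Variables (M Tg KP Vm : 'I_n.+1 -> R) (B : 'I_n.+1 -> 'I_n.+1 -> R) (KI x : R).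

Definition bus_storage (i : 'I_n.+1) (w p gg : R) : R :=
  M i * w ^+ 2 / 2 +
  if i == r then KI * gg ^+ 2 / 2 + Tg i * x * (p - KI * gg) ^+ 2 / 2
  else Tg i * p ^+ 2 / (2 * KP i).

Definition eps_storage (xth : 'I_n -> R) (om PG : 'I_n.+1 -> R) (gg : R) : R :=
  \sum_i bus_storage i (om i) (PG i) gg + network_potential B Vm (rel_angle xth).

Hypotheses (M_gt0 : forall i, 0 < M i) (Tg_gt0 : forall i, 0 < Tg i).
Hypotheses (KP_gt0 : forall i, 0 < KP i) (Vm_gt0 : forall i, 0 < Vm i).
Hypotheses (KI_gt0 : 0 < KI) (x_gt0 : 0 < x).

Lemma bus_storage_ge0 i w p gg : 0 <= bus_storage i w p gg.
Proof.
have [M_ge0 Tg_ge0 KP_ge0 KI_ge0 x_ge0] :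
    [/\ 0 <= M i, 0 <= Tg i, 0 <= KP i, 0 <= KI & 0 <= x] by split; apply: ltW.
by rewrite /bus_storage; case: ifP => _;
  rewrite ?(sqr_ge0, addr_ge0, divr_ge0, mulr_ge0).
Qed.

Lemma eps_storage_ge0 xth om PG gg : 0 <= eps_storage xth om PG gg.
Proof.
rewrite addr_ge0 ?network_potential_ge0 //.
by apply: sumr_ge0 => i _; exact: bus_storage_ge0.
Qed.

Variables (HP : {set 'I_n.+1}) (D : 'I_n.+1 -> R) (eps rho : R).
Hypothesis B_sym : forall i j, B i j = B j i.
Hypotheses (rho_ge0 : 0 <= rho) (rho_le_eps : rho <= eps).
Hypothesis rho_le_D : forall i, rho <= D i.
Hypothesis ref_form_ge0 : forall a b,
  0 <= (D r - eps) * a ^+ 2 - (1 - x * (KP r - Tg r * KI)) * (a * b) + x * b ^+ 2.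

Variables (pH theta om PG : 'I_n.+1 -> R -> R) (g : R -> R).
Hypothesis traj :
  eps_agc_traj HP r M D Tg KP Vm B KI (fun _ _ => 0) pH theta om PG g.
Variable t : R.

Local Notation flow i := (power_flow B Vm (fun j => theta j t) (fun _ => 0) i).

Lemma traj_is_derive i :
  [/\ is_derive t 1 (om i) (derive1 (om i) t),
      is_derive t 1 (PG i) (derive1 (PG i) t),
      is_derive t 1 (theta i) (om i t) & is_derive t 1 g (- om r t)].
Proof.
have [/(_ i) [[om_d PG_d th_d] [_ _ th_eq]] [g_d g_eq]] := traj t.
by split; rewrite -?th_eq -?g_eq derive1E; apply: derivableP.
Qed.

Lemma bus_storage_dissipation i :
  derivable (fun s => bus_storage i (om i s) (PG i s) (g s)) t 1 /\
  derive1 (fun s => bus_storage i (om i s) (PG i s) (g s)) t + om i t * flow i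
    <= (if i \in HP then om i t * - pH i t - rho * om i t ^+ 2 else 0).
Proof.
have [om_d PG_d _ g_d] := traj_is_derive i.
have [/(_ i) [_ [PG_eq om_eq _]] _] := traj t.
have [i_eq_r | i_neq_r] := eqVneq i r.
  subst i; pose z := PG r t - KI * g t.
  have V_d : is_derive t 1 (fun s => bus_storage r (om r s) (PG r s) (g s))
      (om r t * (M r * derive1 (om r) t) + KI * g t * - om r t
       + x * z * (Tg r * derive1 (PG r) t + Tg r * KI * om r t)).
    rewrite /bus_storage eqxx; apply: is_derive_eq.
    by rewrite -?[_ *: _]/(_ * _) /z; field.
  have [V_derivable V_val] := V_d.
  split => //; rewrite derive1E V_val om_eq PG_eq /agc_u eqxx.
  apply: (dissipation_split (e := eps)
    (X := (D r - eps) * om r t ^+ 2 - (1 - x * (KP r - Tg r * KI)) * (om r t * z)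
          + x * z ^+ 2)) => //.
  set f := flow r; set h := ind R (r \in HP).
  by rewrite /ind /z /=; ring.
have V_d : is_derive t 1 (fun s => bus_storage i (om i s) (PG i s) (g s))
    (om i t * (M i * derive1 (om i) t) + PG i t * (Tg i * derive1 (PG i) t) / KP i).
  rewrite /bus_storage (negbTE i_neq_r); apply: is_derive_eq.
  by rewrite -?[_ *: _]/(_ * _); field; rewrite gt_eqF.
have [V_derivable V_val] := V_d.
split => //; rewrite derive1E V_val om_eq PG_eq /agc_u (negbTE i_neq_r).
apply: (dissipation_split (e := D i) (X := PG i t ^+ 2 / KP i)) => //.
  by rewrite divr_ge0 ?sqr_ge0 ?ltW.
set f := flow i; set h := ind R (i \in HP).
by rewrite /ind /=; field; rewrite gt_eqF.
Qed.

Lemma eps_storage_dissipation :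
  let Vt := fun s => eps_storage (x_theta (fun j => theta j s))
                       (fun j => om j s) (fun j => PG j s) (g s) in
  derivable Vt t 1 /\
  derive1 Vt t <= \sum_(i in HP) om i t * - pH i t
                  - rho * \sum_(i in HP) om i t ^+ 2.
Proof.
move=> Vt; pose Vi i s := bus_storage i (om i s) (PG i s) (g s).
have Vt_split : Vt = fun s =>
    \sum_i Vi i s + network_potential B Vm (fun j => theta j s).
  by apply/funext => s; rewrite /Vt /eps_storage network_potential_rel_angle.
have Vt_d : is_derive t 1 Vt
    (\sum_i derive1 (Vi i) t + \sum_i om i t * flow i).
  rewrite Vt_split; apply: is_deriveD.
    apply: is_derive_sum_apply => i; rewrite derive1E; apply: derivableP.
    exact: (bus_storage_dissipation i).1.
  by apply: is_derive_network_potential => // i; have [] := traj_is_derive i.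
have [Vt_derivable Vt_val] := Vt_d.
split => //; rewrite derive1E Vt_val -big_split /= mulr_sumr -sumrB.
rewrite [X in _ <= X]big_mkcond /=.
by apply: ler_sum => i _; exact: (bus_storage_dissipation i).2.
Qed.

End Storage.

Theorem lemma2 (R : realType) (n : nat) (HP : {set 'I_n.+1}) (r : 'I_n.+1)
  (M D Tg KP Vm : 'I_n.+1 -> R) (B : 'I_n.+1 -> 'I_n.+1 -> R) (KI : R)
  (HM : forall i, 0 < M i) (HD : forall i, 0 < D i) (HTg : forall i, 0 < Tg i)
  (HKP : forall i, 0 < KP i) (HVm : forall i, 0 < Vm i) (HKI : 0 < KI)
  (HBsym : forall i j, B i j = B j i)
  (HA1 : assumption1 HP D B Vm)
  (HA2 : assumption2 r D Tg KP KI) :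
  exists (Ve : ('I_n -> R) -> ('I_n.+1 -> R) -> ('I_n.+1 -> R) -> R -> R)
         (rho_e : R),
    0 < rho_e /\
    (forall xth om PG g, 0 <= Ve xth om PG g) /\
    forall (pH theta om PG : 'I_n.+1 -> R -> R) (g : R -> R),
      eps_agc_traj HP r M D Tg KP Vm B KI (fun _ _ => 0) pH theta om PG g ->
      forall t : R,
        let Vt := fun s => Ve (x_theta (fun j => theta j s))
                              (fun j => om j s) (fun j => PG j s) (g s) in
        derivable Vt t 1 /\
        derive1 Vt t <= \sum_(i in HP) om i t * (- pH i t)
                        - rho_e * \sum_(i in HP) (om i t) ^+ 2.
Proof.
have dc_gain := ref_dc_gain_gt0 (HD r) (HTg r) HA2.
have [eps [x [eps_gt0 x_gt0 form_ge0]]] := exists_psd_cross_weight (HD r) dc_gain.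
have [[Dmin [Dmin_gt0 Dmin_le]] _] := HA2.
exists (eps_storage r M Tg KP Vm B KI x), (Num.min eps Dmin).
split; first by rewrite lt_min eps_gt0.
split; first exact: eps_storage_ge0.
move=> pH theta om PG g traj t.
have rho_le_eps : Num.min eps Dmin <= eps by rewrite ge_min lexx.
apply: (eps_storage_dissipation HKP HBsym _ rho_le_eps _ form_ge0 traj).
  by rewrite le_min !ltW.
by move=> i; rewrite (le_trans _ (Dmin_le i)) // ge_min lexx orbT.
Qed.
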